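(* There is a function $\varepsilon:\mathbb{N}\to\mathbb{R}_{\ge0}$ with $\varepsilon(n)\to 0$ as $n\to\infty$ such that every $(1,1)$-criss-cross deletion correcting code $\mathcal{C}\subseteq\{0,1\}^{n\times n}$ satisfies $$|\mathcal{C}|\le (1+\varepsilon(n))\,\frac{2^{n^2}}{2^{2n-1}\cdot \frac{n^2}{2}}.$$ Consequently the redundancy $n^2-\log_2|\mathcal{C}|$ is asymptotically at least $2n-2+2\log_2 n$.
   Context: For a binary array $\mathbf{X}$, $\mathbb{D}_{1,1}(\mathbf{X})$ is the set of arrays obtained from $\mathbf{X}$ by deleting one row and one column. A code $\mathcal{C}\subseteq\{0,1\}^{n\times n}$ is a $(1,1)$-criss-cross deletion correcting code if $\mathbb{D}_{1,1}(\mathbf{X})\cap\mathbb{D}_{1,1}(\mathbf{Y})=\emptyset$ for all distinct $\mathbf{X},\mathbf{Y}\in\mathcal{C}$. The redundancy of $\mathcal{C}$ is $n^2-\log_2|\mathcal{C}|$. *)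

From HB Require Import structures.
From mathcomp Require Import all_boot all_order all_algebra.
From mathcomp Require Import all_classical all_reals all_analysis.
Set Implicit Arguments. Unset Strict Implicit. Unset Printing Implicit Defensive.
Import Order.TTheory GRing.Theory Num.Theory.

Definition D11 (m : nat) (X : 'M[bool]_m.+1) : {set 'M[bool]_m} :=
  [set row' i (col' j X) | i : 'I_m.+1, j : 'I_m.+1].

Definition cc_code (m : nat) (C : {set 'M[bool]_m.+1}) : Prop :=
  forall X Y, X \in C -> Y \in C -> X != Y -> [disjoint D11 X & D11 Y].

(* The sets D11 X of the codewords X are pairwise disjoint subsets of the
   2^(m^2) arrays of size m x m, so a code is large only if many codewords have
   few distinct (1,1)-deletions.  Deleting (row i, column j) and (row i', column
   j') with i < i' gives the same array only if rows i and i+1 of X coincide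
   after deleting one entry from each ("confusable" rows), and symmetrically for
   columns.  An array with at most four confusable row pairs and at most four
   confusable column pairs has at least (n - 4)^2 >= n^2/2 deletions once
   n >= 14.  Five confusable row pairs contain three pairwise non-adjacent ones,
   and each of these lower rows is then determined by the row above it, two
   positions and one bit; hence the remaining "thin" arrays number at most
   poly(n) 2^(n^2 - 3n), which is o(2^(m^2) / n^2). *)

From HB Require Import structures.
From mathcomp Require Import all_boot all_order all_algebra zify.
Set Implicit Arguments. Unset Strict Implicit. Unset Printing Implicit Defensive.

Lemma card_bigcup_le (I T : finType) (P : {pred I}) (F : I -> {set T}) :
  #|\bigcup_(i in P) F i| <= \sum_(i in P) #|F i|.
Proof.
apply: (big_ind2 (fun (A : {set T}) n => #|A| <= n)) => [|A n B k leA leB|//].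
  by rewrite cards0.
by rewrite (leq_trans (leq_card_setU A B)) ?leq_add.
Qed.

Lemma sum_card_disjoint_le (I T : finType) (P : {pred I}) (F : I -> {set T}) :
  {in P &, forall i j, i != j -> [disjoint F i & F j]} ->
  \sum_(i in P) #|F i| <= #|T|.
Proof.
move=> disjF; pose G i := if i \in P then F i else set0.
have disjG i j : i != j -> [disjoint G i & G j].
  rewrite /G -setI_eq0; case: ifP => Pi; case: ifP => Pj neq_ij;
    rewrite ?set0I ?setI0 // setI_eq0; exact: disjF.
have -> : \sum_(i in P) #|F i| = \sum_i #|G i|.
  rewrite big_mkcond; apply: eq_bigr => i _.
  by rewrite /G; case: ifP; rewrite ?cards0.
have := partition_disjoint_bigcup addn (fun _ => 1) disjG.
rewrite sum1_card (eq_bigr (fun i => #|G i|)) => [<-|i _]; last by rewrite sum1_card.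
exact: max_card.
Qed.

Lemma card_mx_determined_le (K : finType) r c (A : {set 'M[K]_(r, c)})
    (Q : {set 'I_r * 'I_c}) :
  {in A &, forall X Y : 'M_(r, c),
     {in Q, forall p, X p.1 p.2 = Y p.1 p.2} -> X = Y} ->
  #|A| <= #|K| ^ #|Q|.
Proof.
move=> detA; pose f (X : 'M[K]_(r, c)) : {ffun _ -> K} :=
  [ffun p : {p | p \in Q} => X (val p).1 (val p).2].
have -> : #|Q| = #|{: {p | p \in Q}}| by rewrite card_sig.
rewrite -card_ffun; apply: (@leq_card_in _ _ f) => X Y AX AY eqf.
apply: detA => // p Qp.
by move/ffunP/(_ (exist _ p Qp)): eqf; rewrite !ffunE.
Qed.

Lemma leq_expn_exp2 x k : 0 < k -> x ^ k <= k ^ k * 2 ^ x.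
Proof.
move=> k_gt0; set q := x %/ k.
have le_x : x <= k * 2 ^ q.
  rewrite ltnW // (leq_trans (ltn_ceil x k_gt0)) // mulnC leq_mul2l.
  by rewrite ltn_expl ?orbT.
apply: (@leq_trans ((k * 2 ^ q) ^ k)); first by rewrite leq_exp2r.
rewrite expnMn leq_mul2l -expnM; apply/orP; right.
exact/leq_pexp2l/leq_divM.
Qed.

Section CrissCross.

Variable m : nat.

Local Notation widen := (widen_ord (leqnSn m)).

Definition row_confusable (X : 'M[bool]_m.+1) (g : 'I_m) : bool :=
  [exists a : 'I_m.+1, exists b : 'I_m.+1, [forall c : 'I_m,
     X (lift ord0 g) (lift a c) == X (widen g) (lift b c)]].

Definition confusable (X : 'M[bool]_m.+1) : {set 'I_m} :=
  [set g | row_confusable X g].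

Lemma deleted_rows_confusable (X : 'M[bool]_m.+1) (i i' j j' : 'I_m.+1) :
  i < i' -> row' i (col' j X) = row' i' (col' j' X) ->
  i \in widen @: confusable X.
Proof.
move=> lt_ii' eqX; have lt_im : i < m by have := ltn_ord i'; lia.
pose g := Ordinal lt_im; have -> : i = widen g by apply: val_inj.
apply: imset_f; rewrite inE; apply/existsP; exists j; apply/existsP; exists j'.
apply/forallP => c.
have -> : lift ord0 g = lift i g by apply: val_inj; rewrite /= /bump leqnn.
have -> : widen g = lift i' g by apply: val_inj; rewrite /= /bump leqNgt lt_ii'.
by have := congr1 (fun A : 'M_m => A g c) eqX; rewrite !mxE => ->.
Qed.

Lemma deleted_cols_confusable (X : 'M[bool]_m.+1) (i j j' : 'I_m.+1) :
  j < j' -> row' i (col' j X) = row' i (col' j' X) ->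
  j \in widen @: confusable (trmx X).
Proof.
have tr_deleted (A : 'M[bool]_m.+1) a b :
    trmx (row' a (col' b A)) = row' b (col' a (trmx A)).
  by apply/matrixP => ? ?; rewrite !mxE.
move=> lt_jj' eqX; apply: (deleted_rows_confusable (j := i) (j' := i) lt_jj').
by rewrite -!tr_deleted eqX.
Qed.

Lemma card_D11_ge (X : 'M[bool]_m.+1) :
  (m.+1 - #|confusable X|) * (m.+1 - #|confusable (trmx X)|) <= #|D11 X|.
Proof.
have card_free Y : #|~: (widen @: confusable Y)| = m.+1 - #|confusable Y|.
  rewrite cardsCs setCK card_ord card_imset //.
  by move=> g h /(congr1 val) /= /val_inj.
rewrite -!card_free -cardsX.
pose del p := row' p.1 (col' p.2 X) : 'M[bool]_m.
have del_inj : {in setX (~: (widen @: confusable X))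
                      (~: (widen @: confusable (trmx X))) &, injective del}.
  move=> [i j] [i' j'] /setXP[/= fi fj] /setXP[/= fi' fj']; rewrite /del /= => eqX.
  have [lt_ii'|lt_i'i|/val_inj eq_ii'] := ltngtP i i'.
  - by case/setCP: fi; apply: deleted_rows_confusable lt_ii' eqX.
  - by case/setCP: fi'; apply: deleted_rows_confusable lt_i'i (esym eqX).
  subst i'; have [lt_jj'|lt_j'j|/val_inj -> //] := ltngtP j j'.
  - by case/setCP: fj; apply: deleted_cols_confusable lt_jj' eqX.
  - by case/setCP: fj'; apply: deleted_cols_confusable lt_j'j (esym eqX).
rewrite -(card_in_imset del_inj); apply/subset_leq_card/subsetP.
by move=> _ /imsetP[[i j] _ ->]; exact: imset2_f.
Qed.

(* A certificate (g, (a, b, x)) records that row g.+1 is row g with entry b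
   deleted and bit x inserted at position a. *)
Definition certificate := ('I_m * ('I_m.+1 * 'I_m.+1 * bool))%type.

Definition certifies (X : 'M[bool]_m.+1) (w : certificate) : bool :=
  let: (g, (a, b, x)) := w in
  [forall c, X (lift ord0 g) (lift a c) == X (widen g) (lift b c)]
  && (X (lift ord0 g) a == x).

Lemma row_confusable_certified X g :
  row_confusable X g -> exists w, certifies X (g, w).
Proof.
case/existsP=> a /existsP[b eq_ab]; exists (a, b, X (lift ord0 g) a).
by rewrite /= eq_ab eqxx.
Qed.

Definition spread t (k : {ffun 'I_t -> certificate}) : bool :=
  [forall s, forall s', (s != s') ==>
     ((k s).1 != (k s').1) && ((k s).1.+1 != (k s').1)].

Definition certified t (k : {ffun 'I_t -> certificate}) X : bool :=
  spread k && [forall s, certifies X (k s)].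

Definition spread_confusable t : {set 'M[bool]_m.+1} :=
  [set X | [exists k : {ffun 'I_t -> certificate}, certified k X]].

Definition determined_rows t (k : {ffun 'I_t -> certificate}) : {set 'I_m.+1} :=
  [set lift ord0 (k s).1 | s in 'I_t].

Lemma card_determined_rows t (k : {ffun 'I_t -> certificate}) :
  spread k -> #|determined_rows k| = t.
Proof.
move=> /forallP spread_k; rewrite card_in_imset ?card_ord // => s s' _ _.
move/(congr1 val) => /= /eqP; rewrite /bump /= !add1n eqSS => /eqP/val_inj eq_g.
apply/eqP; apply: contraT => neq_ss'.
by have /forallP/(_ s')/implyP/(_ neq_ss')/andP[] := spread_k s; rewrite eq_g eqxx.
Qed.

Lemma certified_rigid t (k : {ffun 'I_t -> certificate}) X Y :
  certified k X -> certified k Y ->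
  (forall i j, i \notin determined_rows k -> X i j = Y i j) -> X = Y.
Proof.
move=> /andP[/forallP spread_k /forallP certX] /andP[_ /forallP certY] eq_free.
apply/matrixP => i j; have [det_i|] := boolP (i \in determined_rows k); last first.
  exact: eq_free.
case/imsetP: det_i => s _ ->; have := certX s; have := certY s.
case ks: (k s) => [g [[a b] x]] /=.
move=> /andP[/forallP eqY /eqP Ya] /andP[/forallP eqX /eqP Xa].
have [c ->|->] := unliftP a j; last by rewrite Xa Ya.
rewrite (eqP (eqX c)) (eqP (eqY c)) eq_free //; apply/imsetP => -[s' _ /(congr1 val)].
rewrite /= /bump /= add1n => eq_g.
have [eq_s's|neq_s's] := eqVneq s' s; first by move: eq_g; rewrite eq_s's ks /=; lia.
have /forallP/(_ s)/implyP/(_ neq_s's)/andP[_] := spread_k s'.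
by rewrite ks -eq_g eqxx.
Qed.

Lemma card_certified_le t (k : {ffun 'I_t -> certificate}) :
  #|[set X | certified k X]| * 2 ^ (t * m.+1) <= 2 ^ (m.+1 * m.+1).
Proof.
have [->|[Z]] := set_0Vmem [set X | certified k X]; first by rewrite cards0.
rewrite inE => /andP[spread_k _].
pose Q := setX (~: determined_rows k) [set: 'I_m.+1].
have cardQ : #|Q| + t * m.+1 = m.+1 * m.+1.
  rewrite cardsX cardsT card_ord -{2}(card_determined_rows spread_k) -mulnDl.
  by rewrite addnC cardsC card_ord.
rewrite -cardQ expnD leq_mul2r -[2]card_bool; apply/orP; right.
apply: card_mx_determined_le => X Y; rewrite !inE => cX cY eqXY.
apply: certified_rigid cX cY _ => i j free_i; apply: (eqXY (i, j)).
by rewrite in_setX in_setC free_i in_setT.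
Qed.

Lemma card_spread_confusable t :
  #|spread_confusable t| * 2 ^ (t * m.+1)
    <= (2 * m * m.+1 ^ 2) ^ t * 2 ^ (m.+1 * m.+1).
Proof.
have -> : spread_confusable t =
    \bigcup_(k : {ffun 'I_t -> certificate}) [set X | certified k X].
  apply/setP => X; rewrite inE; apply/existsP/bigcupP => [[k cX]|[k _]].
    by exists k; rewrite ?inE.
  by rewrite inE; exists k.
apply: (leq_trans (leq_mul (card_bigcup_le _ _) (leqnn _))); rewrite big_distrl /=.
apply: (@leq_trans (\sum_(k : {ffun 'I_t -> certificate}) 2 ^ (m.+1 * m.+1))).
  by apply: leq_sum => k _; exact: card_certified_le.
rewrite sum_nat_const card_ffun !card_prod !card_ord card_bool.
have -> : m * (m.+1 * m.+1 * 2) = 2 * m * m.+1 ^ 2 by lia.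
exact: leqnn.
Qed.

Lemma spread_confusable_parity X t (S : {set 'I_m}) (b : bool) :
  t <= #|S| -> (forall g, g \in S -> row_confusable X g && (odd g == b)) ->
  X \in spread_confusable t.
Proof.
move=> le_tS confS; pose e s : 'I_m := enum_val (widen_ord le_tS s).
have e_inj : injective e by move=> s s' /enum_val_inj /(congr1 val) /= /val_inj.
have eS s : e s \in S by exact: enum_valP.
have [w certw] := fin_all_exists (fun s =>
  row_confusable_certified (proj1 (andP (confS _ (eS s))))).
rewrite inE; apply/existsP; exists [ffun s => (e s, w s)]; apply/andP; split.
  apply/forallP => s; apply/forallP => s'; apply/implyP => neq_ss'.
  rewrite !ffunE /= (inj_eq e_inj) neq_ss' /=; apply/eqP => eq_succ.
  have /andP[_ /eqP odd_s] := confS _ (eS s).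
  have /andP[_ /eqP] := confS _ (eS s'); rewrite -eq_succ /= -odd_s.
  by case: (odd (e s)).
by apply/forallP => s; rewrite ffunE.
Qed.

Lemma spread_confusable_of_card X t :
  (t.*2).-1 <= #|confusable X| -> X \in spread_confusable t.
Proof.
move=> le_t; pose odds := [set g : 'I_m | odd g].
have [le_odd|lt_odd] := leqP t #|confusable X :&: odds|.
  apply: (spread_confusable_parity (b := true) le_odd) => g.
  by rewrite !inE => /andP[-> ->].
apply: (spread_confusable_parity (S := confusable X :\: odds) (b := false)).
  move: le_t lt_odd; rewrite -(cardsID odds) -addnn.
  (* lia would see the two elaborations of each cardinal as distinct atoms *)
  by move: #|_ :&: _| #|_ :\: _| => a b; lia.
by move=> g; rewrite !inE => /andP[/negbTE -> ->].
Qed.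

Definition thin : {set 'M[bool]_m.+1} := [set X | #|D11 X| * 2 < m.+1 * m.+1].

Lemma thin_spread_confusable X : 13 <= m -> X \in thin ->
  (X \in spread_confusable 3) || (trmx X \in spread_confusable 3).
Proof.
move=> m_ge13; apply: contraTT; rewrite negb_or => /andP[nX nXT].
have few Y : Y \notin spread_confusable 3 -> #|confusable Y| <= 4.
  by apply: contraNT; rewrite -ltnNge; exact: (@spread_confusable_of_card Y 3).
have : (m - 3) * (m - 3) <= #|D11 X|.
  apply: leq_trans (card_D11_ge X).
  by apply: leq_mul; rewrite -subSS leq_sub2l // few.
rewrite inE -leqNgt; nia.
Qed.

Lemma card_thin_le : 13 <= m -> #|thin| <= 2 * #|spread_confusable 3|.
Proof.
move=> m_ge13.
have sub : thin \subset spread_confusable 3 :|: trmx @: spread_confusable 3.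
  apply/subsetP => X thinX; rewrite inE.
  case/orP: (thin_spread_confusable m_ge13 thinX) => [-> //|XT].
  by rewrite -[X]trmxK imset_f ?orbT.
rewrite (leq_trans (subset_leq_card sub)) // (leq_trans (leq_card_setU _ _)) //.
by rewrite mul2n -addnn leq_add2l leq_imset_card.
Qed.

Lemma sum_card_D11_le (C : {set 'M[bool]_m.+1}) :
  cc_code C -> \sum_(X in C) #|D11 X| <= 2 ^ (m * m).
Proof. by move=> ccC; rewrite -[2]card_bool -card_mx; apply: sum_card_disjoint_le. Qed.

Lemma cc_code_card_le (C : {set 'M[bool]_m.+1}) : cc_code C ->
  #|C| * (m.+1 * m.+1) <= 2 * 2 ^ (m * m) + #|thin| * (m.+1 * m.+1).
Proof.
move=> ccC; rewrite -(cardsID thin C) mulnDl [X in X <= _]addnC leq_add //; last first.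
  by rewrite leq_mul2r subset_leq_card ?subsetIr ?orbT.
have ccC' : cc_code (C :\: thin) by move=> X Y /setDP[CX _] /setDP[CY _]; exact: ccC.
apply: (@leq_trans (2 * \sum_(X in C :\: thin) #|D11 X|)); last first.
  by rewrite leq_mul2l sum_card_D11_le.
rewrite -sum1_card big_distrl big_distrr /=; apply: leq_sum => X /setDP[_].
by rewrite inE -leqNgt mul1n mulnC.
Qed.

Lemma card_thin_small : 13 <= m ->
  #|thin| * m.+1 ^ 3 <= 4 * 12 ^ 12 * 2 ^ (m * m + 1).
Proof.
move=> m_ge13; rewrite -(@leq_pmul2r (2 ^ (3 * m.+1))) ?expn_gt0 //.
have thin_le := card_thin_le m_ge13.
have spread_le := card_spread_confusable 3.
have n12_le := leq_expn_exp2 m.+1 (isT : 0 < 12).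
have base_le : (2 * m * m.+1 ^ 2) ^ 3 * m.+1 ^ 3 <= 8 * m.+1 ^ 12.
  rewrite -expnMn (_ : 8 * m.+1 ^ 12 = (2 * m.+1 ^ 4) ^ 3); last first.
    by rewrite expnMn -expnM.
  by rewrite leq_exp2r // !expnS expn0; nia.
have exp_eq :
    4 * 2 ^ (m * m + 1) * 2 ^ (3 * m.+1) = 16 * 2 ^ (m.+1 * m.+1) * 2 ^ m.+1.
  by rewrite -[4]/(2 ^ 2) -[16]/(2 ^ 4) -!expnD; congr (2 ^ _); lia.
(* |thin| n^3 2^(3n) <= 2 |S| n^3 2^(3n) <= 2 (2 m n^2)^3 n^3 2^(n^2)
   <= 16 n^12 2^(n^2) <= 16 12^12 2^(n + n^2); the powers are generalized so
   that lia treats them as atoms instead of evaluating 12 ^ 12. *)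
have := leq_mul thin_le (leqnn (m.+1 ^ 3 * 2 ^ (3 * m.+1))).
have := leq_mul spread_le (leqnn (2 * m.+1 ^ 3)).
have := leq_mul base_le (leqnn (2 * 2 ^ (m.+1 * m.+1))).
have := leq_mul n12_le (leqnn (16 * 2 ^ (m.+1 * m.+1))).
have := congr1 (muln (12 ^ 12)) exp_eq.
move: (12 ^ 12) (2 ^ (m * m + 1)) (2 ^ (3 * m.+1)) (2 ^ (m.+1 * m.+1)) (2 ^ m.+1).
move: #|thin| #|spread_confusable 3| ((2 * m * m.+1 ^ 2) ^ 3) (m.+1 ^ 3) (m.+1 ^ 12).
lia.
Qed.

End CrissCross.

From mathcomp Require Import all_classical all_reals all_analysis ring.
Import Order.TTheory GRing.Theory Num.Theory.
Import numFieldNormedType.Exports.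
Local Open Scope classical_set_scope.
Local Open Scope ring_scope.

Section Slack.

Variable R : realType.

(* The slack left by cc_code_card_le, with m = n.-1; the value at n = 0 is
   irrelevant. *)
Definition deletion_slack (n : nat) : R :=
  #|thin n.-1|%:R * (n * n)%:R / 2 ^+ (n.-1 * n.-1 + 1).

Lemma deletion_slack_ge0 n : 0 <= deletion_slack n.
Proof. by rewrite /deletion_slack !mulr_ge0. Qed.

Lemma deletion_slack_cvg0 : deletion_slack @ \oo --> 0.
Proof.
rewrite -cvg_shiftS /=; pose K : R := (4 * 12 ^ 12)%N%:R.
apply: (@squeeze_cvgr _ _ _ _ (fun=> 0) (fun n => K * harmonic n)).
- exists 13%N => // m /= m_ge13; rewrite deletion_slack_ge0 /=.
  rewrite /deletion_slack /= ler_pdivrMr ?exprn_gt0 // mulrAC.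
  rewrite ler_pdivlMr ?ltr0n //.
  rewrite /K -!natrM -natrX -natrM ler_nat -mulnA mulnn -expnSr.
  exact: card_thin_small.
- exact: cvg_cst.
- by rewrite -(mulr0 K); apply: cvgMl_tmp; exact: cvg_harmonic.
Qed.

Lemma cc_code_card_le_slack m (C : {set 'M[bool]_m.+1}) : cc_code C ->
  let n := m.+1 in
  (#|C|%:R : R) <= (1 + deletion_slack n) *
                   (2 ^+ (n * n) / (2 ^+ (2 * n - 1) * ((n * n)%:R / 2))).
Proof.
move=> ccC; rewrite /deletion_slack /=; set n := m.+1.
have card_le :
    #|C|%:R * (n * n)%:R <= 2 * 2 ^+ (m * m) + #|thin m|%:R * (n * n)%:R :> R.
  by rewrite -natrX -!natrM -natrD ler_nat cc_code_card_le.
have nn_gt0 : 0 < (n * n)%:R :> R by rewrite ltr0n muln_gt0.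
have -> : (2 : R) ^+ (n * n) = 2 ^+ (m * m) * 2 ^+ (2 * n - 1).
  by rewrite -exprD; congr (_ ^+ _); rewrite /n; lia.
rewrite exprD expr1; set s := #|thin m|%:R * _; set p := 2 ^+ (m * m).
set q := 2 ^+ (2 * n - 1); set N := (n * n)%:R.
rewrite (_ : (1 + s / (p * 2)) * (p * q / (q * (N / 2))) = (2 * p + s) / N); last first.
  by field; rewrite gt_eqF ?expf_neq0 ?andbT.
by rewrite ler_pdivlMr.
Qed.

End Slack.

Theorem theorem2 (R : realType) :
  exists eps : nat -> R,
    (forall n, 0 <= eps n) /\ (eps @ \oo --> (0 : R)) /\
    forall (m : nat) (C : {set 'M[bool]_m.+1}), cc_code C ->
      let n := m.+1 in
      (#|C|%:R : R) <=
        (1 + eps n) * ((2 : R) ^+ (n * n)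
                       / ((2 : R) ^+ (2 * n - 1) * ((n * n)%:R / 2))).
Proof.
exists (deletion_slack R); split; first exact: deletion_slack_ge0.
split; first exact: deletion_slack_cvg0.
exact: cc_code_card_le_slack.
Qed.
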